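(* Let $0<\alpha<1$ and $f>0$. Then the function $$t\mapsto\left(\frac{t}{(1-\alpha)f+\alpha t}\right)^{\frac{1}{1-\alpha}}\cdot\frac{f}{t}$$ is increasing in $t$ on the range of $t>0$ with $\frac{f}{t}\ge 1$. *)

From Stdlib Require Import Reals.
Open Scope R_scope.

Definition gfun (alpha f t : R) : R :=
  Rpower (t / ((1 - alpha) * f + alpha * t)) (1 / (1 - alpha)) * (f / t).

From Stdlib Require Import Reals Lra.
Open Scope R_scope.

(* With E(t) = (1-a) f + a t one has (t / E(t)) ^ (1/(1-a)) * (f / t)
   = f * (t ^ a / E(t)) ^ (1/(1-a)), so it suffices that t ^ a / E(t)
   increases on ]0, f].  For t1 < t2 <= f, Bernoulli's inequality for the
   exponent a gives (t1/t2) ^ a < 1 - a + a (t1/t2), and this is at most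
   E(t1)/E(t2) because the difference is a (1-a) (f - t2) (t2 - t1) / (t2 E(t2)). *)

(* The tangent line of exp at [a * x] lies strictly below exp at [0] and at
   [x]; average the two tangent inequalities with weights [1 - a] and [a]. *)
Lemma exp_lt_affine (a x : R) :
  0 < a < 1 -> x <> 0 -> exp (a * x) < 1 - a + a * exp x.
Proof.
intros [ha0 ha1] hx.
assert (right_tangent := exp_ineq1_le ((1 - a) * x)).
assert (left_tangent : 1 + - a * x < exp (- a * x)).
{ apply exp_ineq1; intro h; apply hx; nra. }
assert (e_right : exp (a * x) * exp ((1 - a) * x) = exp x).
{ rewrite <- exp_plus; f_equal; ring. }
assert (e_left : exp (a * x) * exp (- a * x) = 1).
{ rewrite <- exp_plus, <- exp_0; f_equal; ring. }
assert (hp := exp_pos (a * x)).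
assert (exp (a * x) * 1
        < exp (a * x) * (a * exp ((1 - a) * x) + (1 - a) * exp (- a * x))).
{ apply Rmult_lt_compat_l; nra. }
nra.
Qed.

Lemma Rpower_Bernoulli_lt (a y : R) :
  0 < a < 1 -> 0 < y -> y <> 1 -> Rpower y a < 1 - a + a * y.
Proof.
intros ha hy hy1.
rewrite <- (exp_ln y hy) at 2.
apply exp_lt_affine; [exact ha |].
intro h; apply hy1, ln_inv; [exact hy | lra | now rewrite ln_1].
Qed.

Lemma mix_ratio_ge (a f t1 t2 : R) :
  0 < a < 1 -> 0 < t1 -> t1 <= t2 -> t2 <= f ->
  1 - a + a * (t1 / t2) <= ((1 - a) * f + a * t1) / ((1 - a) * f + a * t2).
Proof.
intros ha ht1 h12 h2f.
assert (hE2 : 0 < (1 - a) * f + a * t2) by nra.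
apply (Rmult_le_reg_r (t2 * ((1 - a) * f + a * t2))); [nra |].
replace ((1 - a + a * (t1 / t2)) * (t2 * ((1 - a) * f + a * t2)))
  with ((1 - a) * f * t2 + a * t1 * t2 - a * (1 - a) * (f - t2) * (t2 - t1))
  by (field; lra).
replace (((1 - a) * f + a * t1) / ((1 - a) * f + a * t2)
         * (t2 * ((1 - a) * f + a * t2)))
  with ((1 - a) * f * t2 + a * t1 * t2) by (field; lra).
assert (0 <= a * (1 - a) * (f - t2) * (t2 - t1)).
{ repeat apply Rmult_le_pos; lra. }
lra.
Qed.

Lemma Rpower_div_mix_increasing (a f t1 t2 : R) :
  0 < a < 1 -> 0 < t1 -> t1 < t2 -> t2 <= f ->
  Rpower t1 a / ((1 - a) * f + a * t1) < Rpower t2 a / ((1 - a) * f + a * t2).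
Proof.
intros ha ht1 h12 h2f.
set (E1 := (1 - a) * f + a * t1); set (E2 := (1 - a) * f + a * t2).
assert (hE1 : 0 < E1) by (unfold E1; nra).
assert (hE2 : 0 < E2) by (unfold E2; nra).
assert (hP2 : 0 < Rpower t2 a) by apply exp_pos.
assert (ratio_lt : Rpower (t1 / t2) a < E1 / E2).
{ eapply Rlt_le_trans; [apply Rpower_Bernoulli_lt | apply mix_ratio_ge]; try lra.
  - apply Rdiv_lt_0_compat; lra.
  - intro h; apply Rdiv_diag_uniq in h; lra. }
replace (Rpower t1 a) with (Rpower (t1 / t2) a * Rpower t2 a).
2: { rewrite Rpower_mult_distr by (try apply Rdiv_lt_0_compat; lra).
     f_equal; field; lra. }
replace (Rpower t2 a / E2) with (E1 / E2 * (Rpower t2 a / E1)) by (field; lra).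
rewrite <- Rmult_div_assoc.
apply Rmult_lt_compat_r; [apply Rdiv_lt_0_compat |]; assumption.
Qed.

Lemma ln_div (x y : R) : 0 < x -> 0 < y -> ln (x / y) = ln x - ln y.
Proof.
intros hx hy; unfold Rdiv.
rewrite ln_mult, ln_Rinv; [ring | | | apply Rinv_0_lt_compat]; assumption.
Qed.

Lemma gfun_Rpower (alpha f t : R) :
  0 < alpha < 1 -> 0 < f -> 0 < t ->
  gfun alpha f t
  = f * Rpower (Rpower t alpha / ((1 - alpha) * f + alpha * t)) (1 / (1 - alpha)).
Proof.
intros ha hf ht.
assert (hE : 0 < (1 - alpha) * f + alpha * t) by nra.
unfold gfun, Rpower; rewrite !ln_div, ln_exp by (try apply exp_pos; lra).
replace (f / t) with (f * exp (- ln t)) by now rewrite exp_Ropp, exp_ln.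
rewrite Rmult_comm, Rmult_assoc, <- exp_plus.
f_equal; f_equal; field; lra.
Qed.

Theorem mainTheorem10 (alpha f : R) (ha0 : 0 < alpha) (ha1 : alpha < 1) (hf : 0 < f) :
  forall t1 t2 : R, 0 < t1 -> 0 < t2 -> f / t1 >= 1 -> f / t2 >= 1 ->
    t1 < t2 -> gfun alpha f t1 < gfun alpha f t2.
Proof.
intros t1 t2 ht1 ht2 _ hft2 h12.
assert (h2f : t2 <= f).
{ assert (f / t2 * t2 = f) by (field; lra); nra. }
rewrite !gfun_Rpower by lra.
apply Rmult_lt_compat_l; [exact hf |].
apply Rlt_Rpower_l; [apply Rdiv_lt_0_compat; lra | split].
- assert (0 < Rpower t1 alpha) by apply exp_pos.
  apply Rdiv_lt_0_compat; nra.
- now apply Rpower_div_mix_increasing.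
Qed.
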